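(* Let $\mathbb{K}$ be a field, $k\ge1$, and let $\mathcal{C}\subseteq\mathbb{K}^{2k}$ be a self-dual code with generator matrix $G\in\mathbb{K}^{k\times 2k}$ having no two proportional columns, so that $\Pi_G$ consists of $2k$ distinct points of $\mathbb{P}^{k-1}(\overline{\mathbb{K}})$. Then $\Pi_G$ fails by exactly $\mathrm{nb}(\mathcal{C})$ to impose independent conditions on quadrics; equivalently, $$\mathrm{gd}(\Pi_G)=2k-\dim_{\mathbb{K}}(\mathcal{C}^{(2)})-1=\mathrm{nb}(\mathcal{C})-1.$$
   Context: A linear code of length $n$ over $\mathbb{K}$ is a $\mathbb{K}$-subspace $\mathcal{C}\subseteq\mathbb{K}^n$; self-dual means $\mathcal{C}=\mathcal{C}^\perp$ for the standard bilinear form. $\overline{\mathbb{K}}$ is an algebraic closure of $\mathbb{K}$. For a generator matrix $G$ of $\mathcal{C}$, $\Pi_G\subseteq\mathbb{P}^{k-1}(\overline{\mathbb{K}})$ is the set of points represented by the columns of $G$. The Schur square $\mathcal{C}^{(2)}$ is the span of all componentwise products $c\ast c'=(c_1c'_1,\dots,c_nc'_n)$, $c,c'\in\mathcal{C}$. A set of $N$ points in $\mathbb{P}^{k-1}(\overline{\mathbb{K}})$ fails by $m$ to impose independent conditions on quadrics if the space of quadratic forms in $\overline{\mathbb{K}}[x_1,\dots,x_k]_2$ vanishing on it has dimension $\binom{k+1}{2}-(N-m)$. For $2k$ points failing by $m$, the Gorenstein defect is $\mathrm{gd}=m-1$. Codes are equivalent if they differ by a coordinate permutation; a code is decomposable if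 equivalent to a direct sum $\{(c_1,c_2):c_i\in\mathcal{C}_i\}$ of two nontrivial codes, indecomposable otherwise; $\mathrm{nb}(\mathcal{C})$ is the number of indecomposable blocks in a decomposition of $\mathcal{C}$ into a direct sum of indecomposable codes (an invariant of $\mathcal{C}$). *)

From HB Require Import structures.
From mathcomp Require Import all_boot all_order all_algebra.
Set Implicit Arguments. Unset Strict Implicit. Unset Printing Implicit Defensive.
Import Order.TTheory GRing.Theory Num.Theory.
Local Open Scope ring_scope.

(* A linear code C of length n over K is represented by a matrix G whose
   row space is C; codewords are row vectors c with (c <= G)%MS. *)

Definition schur_prod (K : fieldType) n (c d : 'rV[K]_n) : 'rV[K]_n :=
  \row_j (c 0 j * d 0 j).

Definition is_schur_square (K : fieldType) k n (G : 'M[K]_(k, n)) (S : 'M[K]_n) :=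
  (forall c d : 'rV[K]_n, (c <= G)%MS -> (d <= G)%MS -> (schur_prod c d <= S)%MS) /\
  (forall m (T : 'M[K]_(m, n)),
     (forall c d : 'rV[K]_n, (c <= G)%MS -> (d <= G)%MS -> (schur_prod c d <= T)%MS) ->
     (S <= T)%MS).

Definition dual_code (K : fieldType) k n (G : 'M[K]_(k, n)) : 'M[K]_n := kermx G^T.

Definition self_dual (K : fieldType) k n (G : 'M[K]_(k, n)) : bool :=
  (G == dual_code G)%MS.

Definition proportional_cols (K : fieldType) k n (G : 'M[K]_(k, n)) (i j : 'I_n) : bool :=
  (\rank (row_mx (col i G) (col j G)) <= 1)%N.

Definition supp_in (K : fieldType) n (A : {set 'I_n}) (c : 'rV[K]_n) : Prop :=
  forall j, j \notin A -> c 0 j = 0.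

(* The subcode C_B = C /\ V_B (codewords supported in B), viewed as a code on the
   coordinates of B, is a direct sum of the codes on A and on B \ A. *)
Definition splits_within (K : fieldType) k n (G : 'M[K]_(k, n)) (B A : {set 'I_n}) : Prop :=
  forall c : 'rV[K]_n, (c <= G)%MS -> supp_in B c ->
    exists c1 c2 : 'rV[K]_n,
      [/\ (c1 <= G)%MS, (c2 <= G)%MS, supp_in A c1, supp_in (B :\: A) c2 & c = c1 + c2].

Definition indecomposable_block (K : fieldType) k n (G : 'M[K]_(k, n)) (B : {set 'I_n}) : Prop :=
  ~ exists A : {set 'I_n}, [/\ A != set0, A \proper B & splits_within G B A].

Definition indecomp_decomposition (K : fieldType) k n (G : 'M[K]_(k, n))
    (P : {set {set 'I_n}}) : Prop :=
  [/\ partition P [set: 'I_n],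
      (forall c : 'rV[K]_n, (c <= G)%MS ->
         exists f : {set 'I_n} -> 'rV[K]_n,
           (forall B, B \in P -> (f B <= G)%MS /\ supp_in B (f B)) /\
           c = \sum_(B in P) f B)
    & (forall B, B \in P -> indecomposable_block G B)].

(* Monomials x_a x_b (a <= b) of degree 2 in k variables. *)
Definition mono (k : nat) := {p : 'I_k * 'I_k | (p.1 <= p.2)%N}.

(* Evaluation matrix: row m = monomial, column j = point (column j of P).
   A quadratic form is a coefficient row vector q in 'rV_#|mono k|;
   it vanishes at all points iff q *m quad_eval_mx P = 0. *)
Definition quad_eval_mx (L : fieldType) k N (P : 'M[L]_(k, N)) : 'M[L]_(#|{: mono k}|, N) :=
  \matrix_(m, j) (let p := val (enum_val m) in P p.1 j * P p.2 j).

Definition vanishing_quadrics (L : fieldType) k N (P : 'M[L]_(k, N)) :=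
  kermx (quad_eval_mx P).

Definition fails_by (L : fieldType) k N (P : 'M[L]_(k, N)) (m : nat) : Prop :=
  (\rank (vanishing_quadrics P))%:Z = ('C(k.+1, 2))%:Z - (N%:Z - m%:Z).

From HB Require Import structures.
From mathcomp Require Import all_boot all_order all_algebra.
From mathcomp Require Import zify.
Import GRing.Theory Num.Theory.
Local Open Scope ring_scope.
Set Implicit Arguments. Unset Strict Implicit.

(* The Schur stabilizer Stab(C) = { x | x * C <= C } is a unital subalgebra of
   K^n for the componentwise product; it contains the indicator of every level
   set of its elements, hence is spanned by the indicators of the atoms of a
   partition of the coordinates. A coordinate set A inside a block B splits the
   part of C supported on B exactly when the indicator of A lies in Stab(C), so
   the indecomposable blocks of C are these atoms and dim Stab(C) = nb(C).
   When C = C^perp, x * C <= C iff <x * c, c'> = 0 for all c, c' in C, i.e. iff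
   x is orthogonal to C^(2); thus dim C^(2) = 2k - nb(C). Finally the quadrics
   vanishing on Pi_G form the kernel of the evaluation map on the degree 2
   monomials, whose image is C^(2) and keeps its rank after extending scalars. *)

Section SchurProduct.
Variables (K : fieldType) (n : nat).
Implicit Types (c x : 'rV[K]_n) (A B : {set 'I_n}) (P : {set {set 'I_n}}).

Lemma mul_mx_diag_schur c x : c *m diag_mx x = schur_prod c x.
Proof. by apply/rowP => j; rewrite mul_mx_diag !mxE. Qed.

Lemma schur_prodC c x : schur_prod c x = schur_prod x c.
Proof. by apply/rowP => j; rewrite !mxE mulrC. Qed.

Definition indic A : 'rV[K]_n := \row_j (j \in A)%:R.

Lemma schur_indic_supp A c : supp_in A (schur_prod c (indic A)).
Proof. by move=> j /negbTE jA; rewrite !mxE jA mulr0. Qed.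

Lemma schur_sum_indic_partition P c :
  partition P [set: 'I_n] -> c = \sum_(B in P) schur_prod c (indic B).
Proof.
case/and3P => /eqP coverP /trivIsetP disjP _; apply/rowP => t.
have /bigcupP[B0 B0P tB0] : t \in cover P by rewrite coverP inE.
rewrite summxE (bigD1 B0) //= big1 ?addr0 => [|B /andP[BP neB]];
  rewrite !mxE ?tB0 ?mulr1 //.
by rewrite (disjointFl (disjP _ _ BP B0P neB) tB0) mulr0.
Qed.

Definition block_indicator_mx P : 'M[K]_(#|P|, n) :=
  \matrix_(i < #|P|) indic (enum_val i).

Lemma indic_sub_block_indicator_mx P B : B \in P -> (indic B <= block_indicator_mx P)%MS.
Proof.
move=> BP; rewrite -(enum_rankK_in BP BP).
by apply: eq_row_sub (enum_rank_in BP B) _; apply/rowP => j; rewrite !mxE.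
Qed.

Lemma mul_block_indicator_mx_entry P (w : 'rV[K]_#|P|) (i : 'I_#|P|) t :
  trivIset P -> t \in enum_val i -> (w *m block_indicator_mx P) 0 t = w 0 i.
Proof.
move=> /trivIsetP disjP ti; rewrite !mxE (bigD1 i) //= !mxE ti mulr1.
rewrite big1 ?addr0 // => i' ne_i'; rewrite !mxE.
have ne : enum_val i' != enum_val i :> {set 'I_n} by rewrite (inj_eq enum_val_inj).
by rewrite (disjointFl (disjP _ _ (enum_valP i') (enum_valP i) ne) ti) mulr0.
Qed.

Lemma row_free_block_indicator_mx P :
  partition P [set: 'I_n] -> row_free (block_indicator_mx P).
Proof.
case/and3P=> _ disjP P0; rewrite -kermx_eq0; apply/eqP/row_matrixP => r.
set w := row r _; have wE0 : w *m block_indicator_mx P = 0.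
  by rewrite -row_mul mulmx_ker row0.
apply/rowP => i; have /set0Pn[t ti] : enum_val i != set0.
  by apply: contraNneq P0 => <-; exact: enum_valP.
by rewrite row0 -(mul_block_indicator_mx_entry w disjP ti) wE0 !mxE.
Qed.

End SchurProduct.

Arguments indic {K n}.
Arguments block_indicator_mx K {n}.
Arguments schur_indic_supp {K n} A c.

Section Stabilizer.
Variables (K : fieldType) (k n : nat) (G : 'M[K]_(k, n)).
Implicit Types (c x y : 'rV[K]_n) (A B : {set 'I_n}).

Definition stabilizes x := (G *m diag_mx x <= G)%MS.

Lemma stabilizesP x :
  reflect (forall c, (c <= G)%MS -> (schur_prod c x <= G)%MS) (stabilizes x).
Proof.
apply: (iffP idP) => [Gx c /submxP[u ->] | Gx].
  by rewrite -mul_mx_diag_schur -mulmxA (submx_trans _ Gx) ?submxMl.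
by apply/row_subP => i; rewrite row_mul mul_mx_diag_schur Gx ?row_sub.
Qed.

Lemma stabilizes1 : stabilizes (const_mx 1).
Proof. by rewrite /stabilizes diag_const_mx mulmx1. Qed.

Lemma stabilizesD x y : stabilizes x -> stabilizes y -> stabilizes (x + y).
Proof. by move=> Gx Gy; rewrite /stabilizes linearD mulmxDr addmx_sub. Qed.

Lemma stabilizesZ a x : stabilizes x -> stabilizes (a *: x).
Proof.
move=> Gx; rewrite /stabilizes.
have -> : diag_mx (a *: x) = a *: diag_mx x.
  by apply/matrixP => i j; rewrite !mxE mulrnAr.
by rewrite -scalemxAr scalemx_sub.
Qed.

Lemma stabilizesM x y : stabilizes x -> stabilizes y -> stabilizes (schur_prod x y).
Proof.
move=> Gx Gy; rewrite /stabilizes -mulmx_diag mulmxA.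
exact: submx_trans (submxMr _ Gx) Gy.
Qed.

Lemma stabilizes_prod (I : Type) (s : seq I) (F : I -> 'rV[K]_n) :
  (forall i, stabilizes (F i)) -> stabilizes (\row_j \prod_(i <- s) F i 0 j).
Proof.
move=> GF; elim: s => [|i s IHs].
  suff -> : \row_j \prod_(i <- [::]) F i 0 j = const_mx 1 by exact: stabilizes1.
  by apply/rowP => j; rewrite !mxE big_nil.
suff -> : \row_j \prod_(i' <- i :: s) F i' 0 j =
          schur_prod (F i) (\row_j \prod_(i' <- s) F i' 0 j).
  exact: stabilizesM.
by apply/rowP => j; rewrite !mxE big_cons.
Qed.

(* The level set indicator of [x] at [l] is the product over [j] of the
   Lagrange factors [(x - x_j) / (l - x_j)], taken over the [j] with [x_j != l]. *)
Lemma stabilizes_level x l : stabilizes x -> stabilizes (\row_i (x 0 i == l)%:R).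
Proof.
move=> Gx.
pose F j : 'rV[K]_n :=
  if x 0 j != l then (l - x 0 j)^-1 *: (x + (- x 0 j) *: const_mx 1) else const_mx 1.
have GF j : stabilizes (F j).
  rewrite /F; case: ifP => _; last exact: stabilizes1.
  by apply/stabilizesZ/stabilizesD/stabilizesZ/stabilizes1.
suff -> : \row_i (x 0 i == l)%:R = \row_i \prod_(j <- index_enum 'I_n) F j 0 i.
  exact: stabilizes_prod.
apply/rowP => i; rewrite !mxE; have [xil | xinl] := eqP.
  rewrite big1 // => j _; rewrite /F; case: ifP => [xjl|_]; last by rewrite mxE.
  by rewrite !mxE mulr1 xil mulrC divff // subr_eq0 eq_sym.
rewrite (bigD1_seq i) ?mem_index_enum ?index_enum_uniq //= /F.
by move/eqP/negbTE: (xinl) => ->; rewrite !mxE mulr1 subrr mulr0 mul0r.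
Qed.

Lemma splits_within_stabilizes B A : stabilizes (indic A) -> splits_within G B (B :&: A).
Proof.
move=> /stabilizesP GA c Gc cB.
exists (schur_prod c (indic A)), (c - schur_prod c (indic A)); split.
- exact: GA.
- by rewrite addmx_sub ?eqmx_opp ?GA.
- move=> t; rewrite inE negb_and => /orP[tB | tA]; rewrite !mxE.
    by rewrite cB ?mul0r.
  by rewrite (negbTE tA) mulr0.
- move=> t; rewrite !inE negb_and negbK => /orP[/andP[tB tA] | tB]; rewrite !mxE.
    by rewrite tA mulr1 subrr.
  by rewrite cB ?mul0r ?subrr.
- by rewrite addrC subrK.
Qed.

Lemma stabilizes_splits_within B A :
  A \subset B -> stabilizes (indic B) -> splits_within G B A -> stabilizes (indic A).
Proof.
move=> /subsetP AB /stabilizesP GB splitA; apply/stabilizesP => c Gc.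
have [c1 [c2 [Gc1 _ c1A c2BA /rowP cBE]]] := splitA _ (GB c Gc) (schur_indic_supp B c).
suff -> : schur_prod c (indic A) = c1 by [].
apply/rowP => t; have := cBE t.
rewrite !mxE; have [tA | tnA] := boolP (t \in A).
  by rewrite AB // c2BA ?inE ?tA // addr0 !mulr1.
by rewrite c1A // mulr0.
Qed.

Section Decomposition.
Variable P : {set {set 'I_n}}.
Hypothesis decP : indecomp_decomposition G P.

Lemma stabilizes_block B : B \in P -> stabilizes (indic B).
Proof.
case: decP => partP sumP _ BP; apply/stabilizesP => c /sumP[f [fP ->]].
have /trivIsetP disjP : trivIset P by case/and3P: partP.
suff -> : schur_prod (\sum_(B0 in P) f B0) (indic B) = f B by case: (fP B BP).
apply/rowP => j; rewrite !mxE summxE.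
have [jB | jnB] := boolP (j \in B); last by rewrite mulr0 (proj2 (fP B BP)).
rewrite mulr1 (bigD1 B) //= big1 ?addr0 // => B' /andP[B'P neB'].
by apply: (proj2 (fP B' B'P)); rewrite (disjointFl (disjP _ _ B'P BP neB')).
Qed.

(* Otherwise the level set of [x] through [i] would split the block [B]. *)
Lemma stabilizes_const_on_block B x i j :
  B \in P -> stabilizes x -> i \in B -> j \in B -> x 0 i = x 0 j.
Proof.
case: decP => _ _ indecP BP Gx iB jB; apply/eqP/negPn/negP => xij.
pose A := [set t | x 0 t == x 0 i].
have GA : stabilizes (indic A).
  suff -> : indic A = \row_t (x 0 t == x 0 i)%:R :> 'rV[K]_n by exact: stabilizes_level.
  by apply/rowP => t; rewrite !mxE inE.
apply: (indecP B BP); exists (B :&: A); split; last exact: splits_within_stabilizes.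
  by apply/set0Pn; exists i; rewrite !inE iB eqxx.
rewrite properEneq subsetIl andbT; apply: contraNneq xij => BAB.
by move: jB; rewrite -BAB !inE eq_sym => /andP[].
Qed.

Lemma stabilizes_sub_block_indicator_mx x :
  stabilizes x -> (x <= block_indicator_mx K P)%MS.
Proof.
have [partP _ _] := decP; move=> Gx.
rewrite (schur_sum_indic_partition x partP); apply: summx_sub => B BP.
have /set0Pn[b bB] : B != set0 by apply: contraTneq BP => ->; case/and3P: partP.
suff -> : schur_prod x (indic B) = x 0 b *: indic B.
  by rewrite scalemx_sub ?indic_sub_block_indicator_mx.
apply/rowP => t; rewrite !mxE; have [tB | _] := boolP (t \in B); last by rewrite !mulr0.
by rewrite (stabilizes_const_on_block BP Gx tB bB).
Qed.

End Decomposition.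

End Stabilizer.

Section QuadraticEvaluation.
Variables (K : fieldType) (k n : nat) (G : 'M[K]_(k, n)).
Implicit Types (c d x : 'rV[K]_n).

Lemma row_quad_eval_mx m :
  row m (quad_eval_mx G) =
  schur_prod (row (val (enum_val m)).1 G) (row (val (enum_val m)).2 G).
Proof. by apply/rowP => j; rewrite !mxE. Qed.

Lemma schur_prod_rows_sub_quad_eval_mx a b :
  (schur_prod (row a G) (row b G) <= quad_eval_mx G)%MS.
Proof.
wlog le_ab : a b / (a <= b)%N => [sym|].
  by have [/sym // | /ltnW/sym] := leqP a b; rewrite schur_prodC.
pose m := enum_rank (exist _ (a, b) le_ab : mono k).
suff -> : schur_prod (row a G) (row b G) = row m (quad_eval_mx G) by exact: row_sub.
by rewrite row_quad_eval_mx enum_rankK.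
Qed.

Lemma schur_prod_sub_quad_eval_mx c d :
  (c <= G)%MS -> (d <= G)%MS -> (schur_prod c d <= quad_eval_mx G)%MS.
Proof.
move=> /submxP[u ->] /submxP[v ->].
have -> : schur_prod (u *m G) (v *m G) =
    \sum_a \sum_b (u 0 a * v 0 b) *: schur_prod (row a G) (row b G).
  apply/rowP => j; rewrite !mxE summxE big_distrl /=; apply: eq_bigr => a _.
  rewrite summxE big_distrr /=; apply: eq_bigr => b _.
  by rewrite !mxE mulrACA.
do 2![apply: summx_sub => ? _]; exact/scalemx_sub/schur_prod_rows_sub_quad_eval_mx.
Qed.

Lemma schur_square_eqmx S : is_schur_square G S -> (S == quad_eval_mx G)%MS.
Proof.
case=> schurS minS; rewrite minS /=; last exact: schur_prod_sub_quad_eval_mx.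
by apply/row_subP => m; rewrite row_quad_eval_mx schurS ?row_sub.
Qed.

Lemma quad_eval_map_mx (L : fieldType) (f : {rmorphism K -> L}) :
  quad_eval_mx (map_mx f G) = map_mx f (quad_eval_mx G).
Proof. by apply/matrixP => m j; rewrite !mxE /= !mxE rmorphM. Qed.

Lemma quad_form_diag_entry x a b :
  (G *m diag_mx x *m G^T) a b = \sum_j x 0 j * (G a j * G b j).
Proof.
rewrite mul_mx_diag !mxE; apply: eq_bigr => j _.
by rewrite !mxE mulrAC mulrC.
Qed.

Lemma mul_quad_eval_tr_entry x m :
  (x *m (quad_eval_mx G)^T) 0 m =
  \sum_j x 0 j * (G (val (enum_val m)).1 j * G (val (enum_val m)).2 j).
Proof. by rewrite !mxE; apply: eq_bigr => j _; rewrite !mxE. Qed.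

(* The Gram matrix is symmetric, so the pairs [a <= b] indexing the monomials
   already give all of its entries. *)
Lemma quad_form_diag_eq0 x :
  (G *m diag_mx x *m G^T == 0) = (x *m (quad_eval_mx G)^T == 0).
Proof.
apply/eqP/eqP => [Gx0 | Qx0].
  by apply/rowP => m; rewrite mul_quad_eval_tr_entry -quad_form_diag_entry Gx0 !mxE.
have entry0 (a b : 'I_k) : (a <= b)%N -> (G *m diag_mx x *m G^T) a b = 0.
  move=> le_ab; move/rowP: Qx0 => /(_ (enum_rank (exist _ (a, b) le_ab : mono k))).
  by rewrite mul_quad_eval_tr_entry enum_rankK quad_form_diag_entry !mxE.
apply/matrixP => a b; rewrite [RHS]mxE; have [/entry0 // | /ltnW/entry0 <-] := leqP a b.
by rewrite !quad_form_diag_entry; apply: eq_bigr => j _; rewrite (mulrC (G a j)).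
Qed.

End QuadraticEvaluation.

Definition dual_schur_square_mx (K : fieldType) k n (G : 'M[K]_(k, n)) : 'M[K]_n :=
  kermx (quad_eval_mx G)^T.

Definition stab_equiv (K : fieldType) k n (G : 'M[K]_(k, n)) : rel 'I_n :=
  fun i j => [forall r, dual_schur_square_mx G r i == dual_schur_square_mx G r j].

Lemma stab_equiv_equivalence (K : fieldType) k n (G : 'M[K]_(k, n)) :
  equivalence_rel (stab_equiv G).
Proof.
move=> i j l; split => [|/forallP eq_ij]; first exact/forallP.
by apply/forallP/forallP => eq_l r; have := eq_l r; rewrite (eqP (eq_ij r)).
Qed.

Section SelfDual.
Variables (K : fieldType) (k n : nat) (G : 'M[K]_(k, n)).
Hypothesis sdG : self_dual G.
Implicit Types (x : 'rV[K]_n) (P : {set {set 'I_n}}).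

Lemma self_dual_subE m (M : 'M[K]_(m, n)) : (M <= G)%MS = (M *m G^T == 0).
Proof.
move: sdG; rewrite /self_dual /dual_code -sub_kermx => /andP[sGK sKG].
by apply/idP/idP => /submx_trans; [apply | apply].
Qed.

Lemma stabilizesE x : stabilizes G x = (x <= dual_schur_square_mx G)%MS.
Proof. by rewrite /stabilizes self_dual_subE quad_form_diag_eq0 sub_kermx. Qed.

Lemma dual_schur_square_eqmx P :
  indecomp_decomposition G P -> (dual_schur_square_mx G == block_indicator_mx K P)%MS.
Proof.
move=> decP; apply/andP; split; apply/row_subP => i.
  by apply: (stabilizes_sub_block_indicator_mx decP); rewrite stabilizesE row_sub.
rewrite -stabilizesE (_ : row i _ = indic (enum_val i)).
  exact: (stabilizes_block decP (enum_valP i)).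
by apply/rowP => j; rewrite !mxE.
Qed.

Lemma rank_dual_schur_square_mx P :
  indecomp_decomposition G P -> \rank (dual_schur_square_mx G) = #|P|.
Proof.
move=> decP; rewrite (eqmx_rank (dual_schur_square_eqmx decP)).
by apply/eqP/row_free_block_indicator_mx; case: decP.
Qed.

Lemma stabilizes_stab_equiv x i j : stabilizes G x -> stab_equiv G i j -> x 0 i = x 0 j.
Proof.
rewrite stabilizesE => /submxP[w ->] /forallP eq_ij; rewrite !mxE.
by apply: eq_bigr => r _; rewrite (eqP (eq_ij r)).
Qed.

(* The class of [i] is the intersection of the level sets through [i] of the
   rows of [dual_schur_square_mx G], which all stabilize [G]. *)
Lemma stabilizes_stab_class i : stabilizes G (indic [set j | stab_equiv G i j]).
Proof.
pose F r : 'rV[K]_n :=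
  \row_j (row r (dual_schur_square_mx G) 0 j == dual_schur_square_mx G r i)%:R.
suff -> : indic [set j | stab_equiv G i j] = \row_j \prod_(r <- index_enum 'I_n) F r 0 j.
  by apply: stabilizes_prod => r; apply/stabilizes_level; rewrite stabilizesE row_sub.
apply/rowP => j.
have Fj r : F r 0 j = (dual_schur_square_mx G r j == dual_schur_square_mx G r i)%:R.
  by rewrite mxE [row _ _ _ _]mxE.
rewrite [LHS]mxE [RHS]mxE inE.
have [eq_ij | /forallPn[r ne_r]] := boolP (stab_equiv G i j).
  by rewrite big1 // => r _; rewrite Fj (eqP (forallP eq_ij r)) eqxx.
rewrite (bigD1_seq r) ?mem_index_enum ?index_enum_uniq //= Fj.
by rewrite eq_sym (negbTE ne_r) mul0r.
Qed.

Lemma exists_indecomp_decomposition : exists P, indecomp_decomposition G P.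
Proof.
pose P := equivalence_partition (stab_equiv G) [set: 'I_n].
have partP : partition P [set: 'I_n].
  by apply: equivalence_partitionP => i j l _ _ _; apply: stab_equiv_equivalence.
have classP B : B \in P -> exists i, B = [set j | stab_equiv G i j].
  by case/imsetP => i _ ->; exists i; apply/setP => j; rewrite !inE.
exists P; split => // [c Gc | B /classP[i ->] [A [A0 AB splitA]]].
  exists (fun B => schur_prod c (indic B)); split; last exact: schur_sum_indic_partition.
  move=> B /classP[i ->]; split; last exact: schur_indic_supp.
  by move/stabilizesP: (stabilizes_stab_class i); apply.
have GA := stabilizes_splits_within (proper_sub AB) (stabilizes_stab_class i) splitA.
have /set0Pn[j jA] := A0; have [_ [j' j'B j'nA]] := properP AB.
have /subsetP/(_ j jA) := proper_sub AB; rewrite !inE => ij.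
rewrite inE in j'B.
have := stabilizes_stab_equiv GA ij; rewrite (stabilizes_stab_equiv GA j'B) !mxE jA.
by rewrite (negbTE j'nA) /= mulr1n => /esym/eqP; rewrite oner_eq0.
Qed.

End SelfDual.

Lemma card_mono k : #|{: mono k}| = 'C(k.+1, 2).
Proof.
pose F (a b : nat) := if (a <= b)%N then 1%N else 0%N.
have card_le (b : 'I_k) : (\sum_(a < k) F a b)%N = b.+1.
  rewrite -(big_mkord xpredT (F^~ b)) (big_cat_nat _ (n := b.+1)) //=.
  rewrite [X in (_ + X)%N]big1_seq ?addn0; last first.
    by move=> a /andP[_]; rewrite mem_index_iota => /andP[ba _]; rewrite /F leqNgt ba.
  rewrite big_nat_cond (eq_bigr (fun _ => 1%N)) -?big_nat_cond ?sum_nat_const_nat ?muln1 //.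
  by move=> a /andP[/andP[_]]; rewrite ltnS /F => ->.
rewrite card_sig -sum1_card big_mkcond /=.
rewrite -(pair_big xpredT xpredT (fun a b : 'I_k => F a b)) /= exchange_big /=.
by rewrite (eq_bigr _ (fun b _ => card_le b)) -bin2_sum big_mkord big_ord_recl.
Qed.

Theorem mainTheorem3 (K : fieldType) (L : closedFieldType) (iota : {rmorphism K -> L})
    (k : nat) (G : 'M[K]_(k, 2 * k)) :
  (1 <= k)%N ->
  row_free G ->
  self_dual G ->
  (forall i j : 'I_(2 * k), i != j -> ~~ proportional_cols G i j) ->
  (exists P, indecomp_decomposition G P) /\
  (forall P : {set {set 'I_(2 * k)}}, indecomp_decomposition G P ->
     fails_by (map_mx iota G) #|P| /\
     (forall S : 'M[K]_(2 * k), is_schur_square G S ->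
        (2 * k)%:Z - (\rank S)%:Z - 1 = #|P|%:Z - 1)).
Proof.
move=> _ _ sdG _; split=> [|P decP]; first exact: exists_indecomp_decomposition.
have rank_sum : (\rank (quad_eval_mx G) + #|P| = 2 * k)%N.
  rewrite -(rank_dual_schur_square_mx sdG decP) mxrank_ker mxrank_tr.
  by rewrite subnKC ?rank_leq_col.
split=> [|S /schur_square_eqmx/eqmx_rank ->]; last by lia.
have := rank_leq_row (quad_eval_mx G); have := card_mono k.
rewrite /fails_by /vanishing_quadrics quad_eval_map_mx mxrank_ker mxrank_map.
lia.
Qed.
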